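(* Let $p$ be a prime, let $G$ be a finite abelian $p$-group, and let $\boldsymbol{\alpha}=(\alpha_1,\ldots,\alpha_r)$ be a basis for $G$. Let $j$ and $k$ be nonnegative integers with $j<k$. Then $\boldsymbol{\alpha}(j,k)$ is a basis for $G(j,k)$.
   Context: A vector $\boldsymbol{\gamma}=(\gamma_1,\ldots,\gamma_s)$ of elements of a finite abelian group (trivial entries allowed) is a basis for the group $\langle\boldsymbol{\gamma}\rangle$ it generates if every $\beta\in\langle\boldsymbol{\gamma}\rangle$ can be written uniquely as $\gamma_1^{x_1}\cdots\gamma_s^{x_s}$ with $0\le x_i<|\gamma_i|$. For nonnegative integers $j<k$, $G(j,k)=\{\beta^{p^j}:\beta\in G,\ \beta^{p^k}=1_G\}$. With $n_i=\log_p|\alpha_i|$ and $q_i=p^{\,j+\max(0,n_i-k)}$, set $\mathbf{q}(j,k)=(q_1,\ldots,q_r)$ and $\boldsymbol{\alpha}(j,k)=(\alpha_1^{q_1},\ldots,\alpha_r^{q_r})$. *)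

From mathcomp Require Import all_boot all_order all_fingroup all_solvable.
Set Implicit Arguments. Unset Strict Implicit. Unset Printing Implicit Defensive.
Local Open Scope group_scope.

Definition is_basis (gT : finGroupType) (s : nat) (gamma : 'I_s -> gT)
    (H : {set gT}) : Prop :=
  <<[set gamma i | i : 'I_s]>> = H /\
  forall beta, beta \in H ->
    exists! x : {ffun 'I_s -> nat},
      (forall i, (x i < #[gamma i])%N) /\ \prod_(i < s) gamma i ^+ x i = beta.

Definition Gjk (gT : finGroupType) (p j k : nat) (G : {set gT}) : {set gT} :=
  [set b ^+ (p ^ j) | b in [set b in G | b ^+ (p ^ k) == 1]].

(* n_i = log_p #[alpha_i];  q_i = p^(j + max(0, n_i - k)) *)
Definition qjk (gT : finGroupType) (p j k : nat) (r : nat) (alpha : 'I_r -> gT)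
    (i : 'I_r) : nat :=
  p ^ (j + (logn p #[alpha i] - k)).

Definition alphajk (gT : finGroupType) (p j k : nat) (r : nat)
    (alpha : 'I_r -> gT) : 'I_r -> gT :=
  fun i => alpha i ^+ qjk p j k alpha i.

From mathcomp Require Import all_boot all_order all_fingroup all_solvable.
(* Write b in G with b^(p^k) = 1 as a product of powers alpha_i^(x_i). Uniqueness of
   that expression turns b^(p^k) = 1 into p^(n_i) | x_i p^k, i.e. p^(n_i - k) | x_i, so
   b^(p^j) is a product of powers of alpha_i^(q_i) = (alpha_i^(p^(n_i - k)))^(p^j).
   Uniqueness for the new family is inherited from alpha: equal products of powers of
   the alpha_i^(q_i) give equal powers of each alpha_i, hence exponents that agree
   modulo the order of alpha_i^(q_i). *)

Set Implicit Arguments. Unset Strict Implicit. Unset Printing Implicit Defensive.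
Local Open Scope group_scope.

Section Basis.
Variables (gT : finGroupType) (s : nat) (alpha : 'I_s -> gT) (H : {set gT}).
Hypothesis basis_alpha : is_basis alpha H.

Lemma basis_mem i : alpha i \in H.
Proof. by case: basis_alpha => <- _; apply/mem_gen/imset_f. Qed.

Lemma basis_prod_mem (a : 'I_s -> nat) : \prod_(i < s) alpha i ^+ a i \in H.
Proof.
by case: basis_alpha => <- _; apply: group_prod => i _; apply/groupX/mem_gen/imset_f.
Qed.

(* Reducing the exponents modulo the orders brings both products into the range where
   the basis property applies. *)
Lemma basis_expg_eq (a b : 'I_s -> nat) :
  \prod_(i < s) alpha i ^+ a i = \prod_(i < s) alpha i ^+ b i ->
  forall i, alpha i ^+ a i = alpha i ^+ b i.
Proof.
move=> eq_ab i.
have [_ /(_ _ (basis_prod_mem a)) [x [_ x_uniq]]] := basis_alpha.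
have reduced c : \prod_(i < s) alpha i ^+ c i = \prod_(i < s) alpha i ^+ a i ->
    x = [ffun i => c i %% #[alpha i]].
  move=> eq_c; apply: x_uniq; split=> [i'|]; first by rewrite ffunE ltn_pmod.
  by rewrite -eq_c; apply: eq_bigr => i' _; rewrite ffunE expg_mod_order.
have /ffunP/(_ i) := etrans (esym (reduced a erefl)) (reduced b (esym eq_ab)).
by rewrite !ffunE -(expg_mod_order _ (a i)) -(expg_mod_order _ (b i)) => ->.
Qed.

Variables (K : {set gT}) (q : 'I_s -> nat).
Hypotheses (groupK : group_set K) (powers_memK : forall i, alpha i ^+ q i \in K).
Hypothesis powers_spanK : forall beta, beta \in K ->
  exists y : 'I_s -> nat, beta = \prod_(i < s) (alpha i ^+ q i) ^+ y i.

Lemma basis_powers : is_basis (fun i => alpha i ^+ q i) K.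
Proof.
split.
  apply/eqP; rewrite eqEsubset; apply/andP; split.
    by rewrite -[K]/(gval (Group groupK)) gen_subG; apply/subsetP => _ /imsetP[i _ ->].
  apply/subsetP => _ /powers_spanK[y ->]; apply: group_prod => i _.
  by apply/groupX/mem_gen/imset_f.
move=> _ /powers_spanK[y ->].
exists [ffun i => y i %% #[alpha i ^+ q i]]; split.
  split=> [i|]; first by rewrite ffunE ltn_pmod.
  by apply: eq_bigr => i _; rewrite ffunE expg_mod_order.
move=> x [x_lt eq_xy]; apply/ffunP => i; rewrite ffunE.
have eq_alpha :
    \prod_(i < s) alpha i ^+ (q i * x i)%N = \prod_(i < s) alpha i ^+ (q i * y i)%N.
  rewrite (eq_bigr _ (fun i _ => expgM _ _ _)) eq_xy.
  by apply: eq_bigr => i' _; rewrite expgM.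
have /eqP := basis_expg_eq eq_alpha i.
by rewrite !expgM eq_expg_mod_order (modn_small (x_lt i)) => /eqP.
Qed.

End Basis.

Lemma expg_prod (gT : finGroupType) (G : {group gT}) (I : Type) (r : seq I)
    (P : pred I) (f : I -> gT) (n : nat) :
  abelian G -> (forall i, P i -> f i \in G) ->
  (\prod_(i <- r | P i) f i) ^+ n = \prod_(i <- r | P i) f i ^+ n.
Proof.
move=> abG fG; elim: r => [|a r IH]; first by rewrite !big_nil expg1n.
rewrite !big_cons; case: ifP => Pa //.
rewrite -IH expgMn //; apply: (centsP abG); first exact: fG.
by apply: group_prod.
Qed.

Lemma p_elt_orderE (gT : finGroupType) (p : nat) (x : gT) :
  p.-elt x -> #[x] = (p ^ logn p #[x])%N.
Proof. by move=> px; rewrite -p_part part_pnat_id. Qed.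

Lemma dvdn_exp_subn (p n k x : nat) :
  (0 < p)%N -> (p ^ n %| x * p ^ k)%N -> (p ^ (n - k) %| x)%N.
Proof.
move=> p_gt0; have [le_nk _ | lt_kn] := leqP n k.
  by rewrite -subn_eq0 in le_nk; rewrite (eqP le_nk) expn0 dvd1n.
by rewrite -{1}(subnK (ltnW lt_kn)) expnD dvdn_pmul2r // expn_gt0 p_gt0.
Qed.

Section Gjk.
Variables (gT : finGroupType) (p j k : nat) (G : {group gT}).
Hypothesis abG : abelian G.

Lemma group_set_Gjk : group_set (Gjk p j k G).
Proof.
apply/group_setP; split.
  apply/imsetP; exists 1; last by rewrite expg1n.
  by rewrite inE group1 expg1n eqxx.
move=> _ _ /imsetP[a /setIdP[Ga /eqP a1] ->] /imsetP[b /setIdP[Gb /eqP b1] ->].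
have cab : commute a b by apply: (centsP abG).
rewrite -expgMn //; apply: imset_f; rewrite inE groupM //=.
by rewrite expgMn // a1 b1 mulg1.
Qed.

Variables (r : nat) (alpha : 'I_r -> gT).
Hypotheses (p_pr : prime p) (pG : p.-group G) (basis_alpha : is_basis alpha G).

Lemma order_basis i : #[alpha i] = (p ^ logn p #[alpha i])%N.
Proof. exact/p_elt_orderE/(mem_p_elt pG)/(basis_mem basis_alpha). Qed.

Lemma alphajkE i :
  alphajk p j k alpha i = alpha i ^+ (p ^ (logn p #[alpha i] - k)) ^+ (p ^ j).
Proof. by rewrite /alphajk /qjk -expgM -expnD addnC. Qed.

Lemma alphajk_mem_Gjk i : alphajk p j k alpha i \in Gjk p j k G.
Proof.
rewrite alphajkE; apply: imset_f.
rewrite inE (groupX _ (basis_mem basis_alpha i)) /=.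
rewrite -expgM -expnD -order_dvdn {1}order_basis; apply: dvdn_exp2l.
by rewrite addnC -leq_subLR.
Qed.

Lemma Gjk_prod_alphajk beta : beta \in Gjk p j k G ->
  exists y : 'I_r -> nat, beta = \prod_(i < r) alphajk p j k alpha i ^+ y i.
Proof.
case/imsetP=> b /setIdP[Gb /eqP b1] ->.
have [_ /(_ _ Gb) [x [[_ def_b] _]]] := basis_alpha.
have xG i : alpha i ^+ x i \in G by rewrite groupX ?(basis_mem basis_alpha).
have expg_b n : b ^+ n = \prod_(i < r) alpha i ^+ x i ^+ n.
  by rewrite -def_b (expg_prod _ _ abG (fun i _ => xG i)).
have x_dvd i : (p ^ (logn p #[alpha i] - k) %| x i)%N.
  apply: dvdn_exp_subn (prime_gt0 p_pr) _; rewrite -order_basis order_dvdn.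
  have pk_trivial :
      \prod_(i < r) alpha i ^+ (x i * p ^ k)%N = \prod_(i < r) alpha i ^+ 0.
    rewrite [RHS]big1 => [|i' _]; last exact: expg0.
    by rewrite -[in RHS]b1 expg_b; apply: eq_bigr => i' _; rewrite expgM.
  by rewrite (basis_expg_eq basis_alpha pk_trivial) expg0.
exists (fun i => x i %/ p ^ (logn p #[alpha i] - k))%N.
rewrite expg_b; apply: eq_bigr => i _.
by rewrite alphajkE -!expgM mulnCA [(_ * (_ %/ _))%N]mulnC divnK // mulnC.
Qed.

End Gjk.

Theorem lemma1 (gT : finGroupType) (p : nat) (G : {group gT}) (r : nat)
    (alpha : 'I_r -> gT) (j k : nat) :
  prime p -> p.-group G -> abelian G ->
  is_basis alpha G -> (j < k)%N ->
  is_basis (alphajk p j k alpha) (Gjk p j k G).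
Proof.
move=> p_pr pG abG basis_alpha _.
apply: (basis_powers basis_alpha (group_set_Gjk p j k abG)).
  exact: alphajk_mem_Gjk.
exact: Gjk_prod_alphajk.
Qed.
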